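(* Let $\pi,\tau\in\mathfrak{S}_m$. If $\mathcal{O}_\pi=\mathcal{O}_\tau$ and, for all $i\in\mathcal{O}_\pi$, we have $\{\pi_1,\dots,\pi_{m-i}\}=\{\tau_1,\dots,\tau_{m-i}\}$ and $\{\pi_{i+1},\dots,\pi_m\}=\{\tau_{i+1},\dots,\tau_m\}$, then $\pi$ and $\tau$ are super-strongly c-Wilf equivalent.
   Context: $\mathfrak{S}_n$ is the symmetric group on $[n]$, permutations written $\sigma=\sigma_1\cdots\sigma_n$. The standardization $\operatorname{st}(w)$ of a word of distinct integers replaces its smallest entry by 1, the next smallest by 2, etc. For $\pi\in\mathfrak{S}_m$ and $\sigma\in\mathfrak{S}_n$, $\operatorname{Em}(\pi,\sigma)=\{i\in[n-m+1]:\operatorname{st}(\sigma_i\cdots\sigma_{i+m-1})=\pi\}$. For a set $S$ of positive integers, $a^\pi_{n,S}$ is the number of $\sigma\in\mathfrak{S}_n$ with $\operatorname{Em}(\pi,\sigma)=S$; $\pi$ and $\tau$ are super-strongly c-Wilf equivalent if $a^\pi_{n,S}=a^\tau_{n,S}$ for all $n$ and all $S$. The overlap set of $\pi\in\mathfrak{S}_m$ is $\mathcal{O}_\pi=\{i\in[m-1]:\operatorname{st}(\pi_{i+1}\cdots\pi_m)=\operatorname{st}(\pi_1\cdots\pi_{m-i})\}$. *)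

From mathcomp Require Import all_boot.
Set Implicit Arguments. Unset Strict Implicit. Unset Printing Implicit Defensive.

Definition is_perm (m : nat) (s : seq nat) : bool := perm_eq s (iota 1 m).

(* Standardization of a word of distinct integers: each entry x is replaced
   by its rank #{y in w | y <= x}. *)
Definition st (w : seq nat) : seq nat := [seq count (fun y => y <= x) w | x <- w].

(* The factor sigma_i ... sigma_{i+k-1} (i is 1-based). *)
Definition window (s : seq nat) (i k : nat) : seq nat := take k (drop i.-1 s).

Definition Em (pi sigma : seq nat) : seq nat :=
  [seq i <- iota 1 (size sigma + 1 - size pi)
     | st (window sigma i (size pi)) == pi].

Definition seteq (s t : seq nat) : bool := all (mem t) s && all (mem s) t.

Definition a_count (pi : seq nat) (n : nat) (S : seq nat) : nat :=
  count (fun sigma => seteq (Em pi sigma) S) (permutations (iota 1 n)).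

Definition super_strongly_cwilf_equiv (pi tau : seq nat) : Prop :=
  forall (n : nat) (S : seq nat), all (fun i => 0 < i) S ->
    a_count pi n S = a_count tau n S.

Definition overlaps (pi : seq nat) : seq nat :=
  [seq i <- iota 1 (size pi).-1 | st (drop i pi) == st (take (size pi - i) pi)].

(* Let F_pi(A) count the permutations of [n] in which pi occurs at every
   position of A.  Since F_pi(A) is the sum of a^pi_{n,B} over the supersets B of
   A, it suffices by Moebius inversion to show F_pi(A) = F_tau(A).  Write
   tau_j = pi_(f j).  If sigma has pi at every position of A, reorder the entries
   of each of these windows by f: every window then standardizes to tau.  Two
   windows of A that meet start at a distance d in O_pi, and the hypothesis on
   the first and last m - d letters forces f(d + x) = d + f(x), so the
   reorderings of overlapping windows agree and glue to one permutation of the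
   positions of sigma.  This injects the permutations counted by F_pi(A) into
   those counted by F_tau(A), and symmetrically. *)

From mathcomp Require Import all_boot zify.
Set Implicit Arguments. Unset Strict Implicit. Unset Printing Implicit Defensive.

Lemma perm_map_inj_in (T : eqType) (f : T -> T) (s : seq T) : uniq s ->
  {in s, forall x, f x \in s} -> {in s &, injective f} -> perm_eq (map f s) s.
Proof.
move=> u_s f_s f_inj; have u_fs : uniq (map f s) by rewrite map_inj_in_uniq.
have sub : {subset map f s <= s} by move=> _ /mapP[x xs ->]; apply: f_s.
by apply: uniq_perm => //; have [] := uniq_min_size u_fs sub; rewrite ?size_map.
Qed.

Lemma count_leq_inj (T : eqType) (a b : pred T) (f : T -> T) (P : seq T) : uniq P ->
  {in P, forall x, f x \in P} -> {in P &, injective f} ->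
  {in P, forall x, a x -> b (f x)} -> count a P <= count b P.
Proof.
move=> u_P f_P f_inj f_ab; rewrite -!size_filter -(size_map f).
apply: uniq_leq_size.
  rewrite map_inj_in_uniq ?filter_uniq // => x y; rewrite !mem_filter.
  by move=> /andP[_ xP] /andP[_ yP]; apply: f_inj.
move=> y /mapP[x]; rewrite !mem_filter => /andP[ax xP] ->.
by rewrite f_ab ?f_P.
Qed.

Lemma count_superset (T : finType) (U : Type) (E : U -> {set T}) (P : seq U)
    (A : {set T}) :
  count (fun x => A \subset E x) P =
  \sum_(B : {set T} | A \subset B) count (fun x => E x == B) P.
Proof.
elim: P => [|x P IHP] /=; first by rewrite big1.
rewrite IHP big_split /=; congr (_ + _).
have [AE | nAE] := boolP (A \subset E x).
  rewrite (bigD1 (E x)) //= eqxx big1 // => B /andP[_ /negbTE].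
  by rewrite eq_sym => ->.
by rewrite big1 // => B AB; case: eqP => // EB; rewrite EB AB in nAE.
Qed.

Lemma eq_from_superset_sums (T : finType) (f g : {set T} -> nat) :
  (forall A : {set T},
     \sum_(B : {set T} | A \subset B) f B = \sum_(B : {set T} | A \subset B) g B) ->
  f =1 g.
Proof.
move=> eq_sums A; have [k] := ubnP #|~: A|; elim: k A => // k IHk A cardA.
have := eq_sums A; rewrite (bigD1 A) //= [in RHS](bigD1 A) //=.
suff -> : \sum_(B : {set T} | (A \subset B) && (B != A)) f B =
          \sum_(B : {set T} | (A \subset B) && (B != A)) g B.
  by move/addIn.
apply: eq_bigr => B /andP[AB BA]; apply: IHk.
have : ~: B \proper ~: A by rewrite properC properEneq eq_sym BA.
by move/proper_card; lia.
Qed.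

Definition rank (w : seq nat) (x : nat) : nat := count (fun y => y <= x) w.

Lemma size_st w : size (st w) = size w.
Proof. exact: size_map. Qed.

Lemma nth_st w j : j < size w -> nth 0 (st w) j = rank w (nth 0 w j).
Proof. exact: nth_map. Qed.

Lemma leq_rank w y z : y <= z -> rank w y <= rank w z.
Proof. by move=> yz; apply: sub_count => t /= ty; apply: leq_trans ty yz. Qed.

Lemma ltn_rank w y z : y < z -> z \in w -> rank w y < rank w z.
Proof.
move=> yz; elim: w => [|t w IHw] //; rewrite inE /rank /=.
have ty_tz : (t <= y) <= (t <= z).
  by case: (leqP t y) => // ty; rewrite (leq_trans ty (ltnW yz)).
case/orP=> [/eqP <-|zw].
  by have := leq_rank w (ltnW yz); rewrite /rank leqnn (leqNgt z y) yz /=; lia.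
by have := IHw zw; rewrite /rank; lia.
Qed.

Lemma leq_rank_mem w y z : y \in w -> (rank w y <= rank w z) = (y <= z).
Proof.
move=> yw; case: (leqP y z) => [yz | zy]; first exact: leq_rank.
by apply: negbTE; rewrite -ltnNge ltn_rank.
Qed.

Lemma rank_inj w y z : y \in w -> z \in w -> rank w y = rank w z -> y = z.
Proof.
move=> yw zw eq_r; apply/eqP.
by rewrite eqn_leq -(leq_rank_mem _ yw) -(leq_rank_mem _ zw) eq_r !leqnn.
Qed.

Lemma rank_perm_eq u v : perm_eq u v -> rank u =1 rank v.
Proof. by move=> /permP uv x; apply: uv. Qed.

Lemma rank_eq_mem u v : uniq u -> uniq v -> u =i v -> rank u =1 rank v.
Proof. by move=> uu uv eq_uv; apply/rank_perm_eq/uniq_perm. Qed.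

Lemma rank_nth_st u v j : st u = st v -> j < size u ->
  rank u (nth 0 u j) = rank v (nth 0 v j).
Proof.
move=> eq_st ju; have eq_size : size u = size v by rewrite -size_st eq_st size_st.
by rewrite -!nth_st -?eq_size // eq_st.
Qed.

Lemma st_map_mono (f : nat -> nat) u :
  {in u &, {mono f : x y / x <= y}} -> st (map f u) = st u.
Proof.
move=> f_mono; rewrite /st -map_comp; apply/eq_in_map => x xu /=.
by rewrite count_map; apply: eq_in_count => y yu; apply: f_mono.
Qed.

Lemma st_map_rank w u : {subset u <= w} -> st (map (rank w) u) = st u.
Proof. by move=> uw; apply: st_map_mono => x y /uw xw _; apply: leq_rank_mem. Qed.

Lemma st_drop_st w d : st (drop d (st w)) = st (drop d w).
Proof. by rewrite -[st w]/(map (rank w) w) -map_drop st_map_rank // => x /mem_drop. Qed.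

Lemma st_take_st w d : st (take d (st w)) = st (take d w).
Proof. by rewrite -[st w]/(map (rank w) w) -map_take st_map_rank // => x /mem_take. Qed.

Definition occurs (p s : seq nat) (i : nat) : bool :=
  (i + size p <= size s) && (st (take (size p) (drop i s)) == p).

Lemma Em_occurs p s i : (i.+1 \in Em p s) = occurs p s i.
Proof. by rewrite /Em mem_filter mem_iota /occurs /window andbC; congr (_ && _); lia. Qed.

Lemma mem_Em p s x : x \in Em p s -> 0 < x <= (size s).+1.
Proof. by rewrite /Em mem_filter mem_iota => /andP[_]; lia. Qed.

Lemma mem_overlaps pi d : (d \in overlaps pi) =
  (0 < d < size pi) && (st (drop d pi) == st (take (size pi - d) pi)).
Proof. by rewrite /overlaps mem_filter mem_iota andbC; congr (_ && _); lia. Qed.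

Lemma occurs_overlap pi s i j : occurs pi s i -> occurs pi s j ->
  i < j < i + size pi -> j - i \in overlaps pi.
Proof.
move=> /andP[_ /eqP st_i] /andP[_ /eqP st_j] ij.
rewrite mem_overlaps; apply/andP; split; first by lia.
move: st_i st_j; set m := size pi => st_i st_j.
rewrite -{1}st_i -{1}st_j st_drop_st st_take_st; apply/eqP; congr st.
rewrite take_takel; last by lia.
by rewrite !take_drop drop_drop; congr (drop _ (take _ s)); lia.
Qed.

Definition compatible (pi tau : seq nat) : Prop :=
  [/\ uniq pi, perm_eq pi tau, overlaps pi = overlaps tau &
   forall d, d \in overlaps pi ->
     take (size pi - d) pi =i take (size pi - d) tau /\ drop d pi =i drop d tau].

Lemma compatible_sym pi tau : compatible pi tau -> compatible tau pi.
Proof.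
case=> u_pi pi_tau eq_ov eq_sets; split; rewrite -?(perm_uniq pi_tau) 1?perm_sym //.
move=> d; rewrite -eq_ov -(perm_size pi_tau) => /eq_sets[eq_take eq_drop].
by split=> x; rewrite ?eq_take ?eq_drop.
Qed.

Definition pos_map (pi tau : seq nat) (j : nat) : nat := index (nth 0 tau j) pi.

(* tau_(d+x) and pi_(d + pos_map x) lie in the common set of the last m - d letters
   and have the same rank there: transport the rank of tau_x through the overlap d
   of tau, then the rank of pi_(pos_map x) = tau_x through the overlap d of pi. *)
Lemma pos_map_shift pi tau d x : compatible pi tau -> d \in overlaps pi ->
  x + d < size pi -> pos_map pi tau (d + x) = d + pos_map pi tau x.
Proof.
case=> u_pi pi_tau eq_ov eq_sets ov_d xd.
have [eq_take eq_drop] := eq_sets d ov_d.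
have u_tau : uniq tau by rewrite -(perm_uniq pi_tau).
have sz_tau : size tau = size pi by rewrite (perm_size pi_tau).
have ov_tau : d \in overlaps tau by rewrite -eq_ov.
move: ov_tau ov_d; rewrite !mem_overlaps sz_tau.
move=> /andP[_ /eqP st_tau] /andP[_ /eqP st_pi].
set m := size pi in xd eq_take eq_drop sz_tau st_tau st_pi *.
have sz_take (u : seq nat) : size u = m -> size (take (m - d) u) = m - d.
  by move=> su; rewrite size_takel // su leq_subr.
have sz_drop (u : seq nat) : size u = m -> size (drop d u) = m - d.
  by move=> su; rewrite size_drop su.
rewrite /pos_map; set t := nth 0 tau x.
have t_take : t \in take (m - d) pi.
  by rewrite eq_take /t -(nth_take 0 (_ : x < m - d)) ?mem_nth ?sz_take //; lia.
have p_lt : index t pi < m - d by apply: index_ltn.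
have t_pi : nth 0 pi (index t pi) = t by rewrite nth_index // (mem_take t_take).
have rank_tau : rank (drop d pi) (nth 0 tau (d + x)) = rank (take (m - d) pi) t.
  rewrite (rank_eq_mem (drop_uniq d u_pi) (drop_uniq d u_tau) eq_drop).
  rewrite (rank_eq_mem (take_uniq _ u_pi) (take_uniq _ u_tau) eq_take).
  by rewrite -nth_drop (rank_nth_st st_tau) ?nth_take ?sz_drop //; lia.
have rank_pi : rank (drop d pi) (nth 0 pi (d + index t pi)) = rank (take (m - d) pi) t.
  by rewrite -nth_drop (rank_nth_st st_pi) ?sz_drop // nth_take ?t_pi.
have -> : nth 0 tau (d + x) = nth 0 pi (d + index t pi).
  apply: rank_inj (etrans rank_tau (esym rank_pi)).
    by rewrite eq_drop -nth_drop mem_nth ?sz_drop //; lia.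
  by rewrite -nth_drop mem_nth ?sz_drop.
by rewrite index_uniq // -/m; lia.
Qed.

Lemma pos_map_lt pi tau j : compatible pi tau -> j < size pi ->
  pos_map pi tau j < size pi.
Proof.
case=> _ pi_tau _ _ j_lt.
by rewrite index_mem (perm_mem pi_tau) mem_nth -?(perm_size pi_tau).
Qed.

Lemma pos_mapK pi tau x : compatible pi tau -> x < size pi ->
  pos_map tau pi (pos_map pi tau x) = x.
Proof.
case=> u_pi pi_tau _ _ x_lt; have u_tau : uniq tau by rewrite -(perm_uniq pi_tau).
rewrite (perm_size pi_tau) in x_lt.
by rewrite /pos_map nth_index ?index_uniq // (perm_mem pi_tau) mem_nth.
Qed.

Lemma perm_pos_map pi tau : compatible pi tau ->
  perm_eq (map (pos_map pi tau) (iota 0 (size pi))) (iota 0 (size pi)).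
Proof.
move=> C; apply: perm_map_inj_in; first exact: iota_uniq.
  by move=> j; rewrite !mem_iota /= => /(pos_map_lt C).
move=> j k; rewrite !mem_iota /= => j_lt k_lt eq_jk.
by rewrite -(pos_mapK C j_lt) eq_jk pos_mapK.
Qed.

Lemma st_pos_map pi tau w : compatible pi tau -> st w = pi ->
  st [seq nth 0 w (pos_map pi tau j) | j <- iota 0 (size pi)] = tau.
Proof.
move=> C st_w; have [_ pi_tau _ _] := C.
have sz_w : size w = size pi by rewrite -st_w size_st.
have perm_w : perm_eq [seq nth 0 w (pos_map pi tau j) | j <- iota 0 (size pi)] w.
  by rewrite map_comp -{2}(mkseq_nth 0 w) sz_w; apply/perm_map/perm_pos_map.
apply: (@eq_from_nth _ 0) => [|j]; rewrite size_st size_map size_iota.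
  by rewrite (perm_size pi_tau).
move=> j_lt; rewrite nth_st ?size_map ?size_iota // (rank_perm_eq perm_w).
rewrite (nth_map 0) ?size_iota // nth_iota // -nth_st ?sz_w ?pos_map_lt // st_w.
by rewrite nth_index // (perm_mem pi_tau) mem_nth // -(perm_size pi_tau).
Qed.

Definition admissible (pi : seq nat) (n : nat) (S : seq nat) : Prop :=
  {in S, forall s, s + size pi <= n} /\
  {in S &, forall s s', s < s' < s + size pi -> s' - s \in overlaps pi}.

Lemma compatible_admissible pi tau n S :
  compatible pi tau -> admissible pi n S -> admissible tau n S.
Proof. by case=> _ pi_tau eq_ov _; rewrite /admissible -eq_ov (perm_size pi_tau). Qed.

(* The first window of S containing q is used; by admissibility any other one would
   give the same value. *)
Definition window_map (pi tau S : seq nat) (q : nat) : nat :=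
  if [seq s <- S | s <= q < s + size pi] is s :: _ then s + pos_map pi tau (q - s) else q.

Lemma window_map_agree pi tau n S s s' q : compatible pi tau -> admissible pi n S ->
  s \in S -> s' \in S -> s <= s' -> s' <= q < s + size pi ->
  s + pos_map pi tau (q - s) = s' + pos_map pi tau (q - s').
Proof.
move=> C [_ S_ov] sS s'S; rewrite leq_eqVlt => /orP[/eqP <- // | ss'] q_in.
have -> : q - s = (s' - s) + (q - s') by lia.
by rewrite pos_map_shift //; [lia | apply: S_ov => //; lia | lia].
Qed.

Lemma window_map_in pi tau n S s q : compatible pi tau -> admissible pi n S ->
  s \in S -> s <= q < s + size pi -> window_map pi tau S q = s + pos_map pi tau (q - s).
Proof.
move=> C HS sS q_in; rewrite /window_map.
case E: [seq s <- S | s <= q < s + size pi] => [|s0 l].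
  by have := mem_filter (fun s => s <= q < s + size pi) s S; rewrite E sS q_in.
have : s0 \in [seq s <- S | s <= q < s + size pi] by rewrite E mem_head.
rewrite mem_filter => /andP[q_in0 s0S].
case: (leqP s0 s) => [s0s | ss0].
  by apply: (window_map_agree C HS) => //; lia.
by symmetry; apply: (window_map_agree C HS) => //; lia.
Qed.

Lemma window_map_out pi tau S q :
  {in S, forall s, ~~ (s <= q < s + size pi)} -> window_map pi tau S q = q.
Proof.
rewrite /window_map => q_out; case E: [seq s <- S | s <= q < s + size pi] => [|s l] //.
have : s \in [seq s <- S | s <= q < s + size pi] by rewrite E mem_head.
by rewrite mem_filter => /andP[q_in /q_out]; rewrite q_in.
Qed.

Lemma window_mapK pi tau n S : compatible pi tau -> admissible pi n S ->
  cancel (window_map pi tau S) (window_map tau pi S).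
Proof.
move=> C HS q; have C' := compatible_sym C; have HS' := compatible_admissible C HS.
have [_ pi_tau _ _] := C; have sz_tau : size tau = size pi by rewrite (perm_size pi_tau).
have [/hasP[s sS q_in] | /hasPn q_out] := boolP (has (fun s => s <= q < s + size pi) S).
  have map_lt : pos_map pi tau (q - s) < size pi by apply: pos_map_lt => //; lia.
  rewrite (window_map_in C HS sS q_in).
  rewrite (window_map_in C' HS' sS) ?sz_tau; last by lia.
  by rewrite addKn pos_mapK //; lia.
by rewrite !window_map_out // sz_tau.
Qed.

Definition rearrange (pi tau S : seq nat) (n : nat) (sg : seq nat) : seq nat :=
  [seq nth 0 sg (window_map pi tau S q) | q <- iota 0 n].

Section Rearrangement.

Variables (pi tau S : seq nat) (n : nat).
Hypotheses (C : compatible pi tau) (HS : admissible pi n S).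

Lemma window_map_lt q : q < n -> window_map pi tau S q < n.
Proof.
move=> q_lt; have [S_fit _] := HS.
have [/hasP[s sS q_in] | /hasPn q_out] := boolP (has (fun s => s <= q < s + size pi) S).
  rewrite (window_map_in C HS sS q_in); have := S_fit s sS.
  have : pos_map pi tau (q - s) < size pi by apply: pos_map_lt => //; lia.
  lia.
by rewrite window_map_out.
Qed.

Lemma perm_window_map : perm_eq (map (window_map pi tau S) (iota 0 n)) (iota 0 n).
Proof.
apply: perm_map_inj_in; first exact: iota_uniq.
  by move=> q; rewrite !mem_iota /= => /window_map_lt.
by move=> q q' _ _; apply: (can_inj (window_mapK C HS)).
Qed.

Lemma perm_rearrange sg :
  perm_eq sg (iota 1 n) -> perm_eq (rearrange pi tau S n sg) (iota 1 n).
Proof.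
move=> sg_perm; have sz : size sg = n by rewrite (perm_size sg_perm) size_iota.
apply: perm_trans sg_perm; rewrite /rearrange map_comp -{2}(mkseq_nth 0 sg) sz.
exact/perm_map/perm_window_map.
Qed.

Lemma rearrange_inj sg sg' : size sg = n -> size sg' = n ->
  rearrange pi tau S n sg = rearrange pi tau S n sg' -> sg = sg'.
Proof.
move=> sz sz' eq_r; apply: (@eq_from_nth _ 0) => [|k]; rewrite ?sz ?sz' // => k_lt.
have : k \in map (window_map pi tau S) (iota 0 n).
  by rewrite (perm_mem perm_window_map) mem_iota.
case/mapP=> q; rewrite mem_iota /= => q_lt ->.
have := congr1 (nth 0 ^~ q) eq_r.
by rewrite !(nth_map 0) ?size_iota // nth_iota.
Qed.

Lemma window_rearrange sg s : size sg = n -> s \in S ->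
  take (size pi) (drop s (rearrange pi tau S n sg)) =
  [seq nth 0 (take (size pi) (drop s sg)) (pos_map pi tau j) | j <- iota 0 (size pi)].
Proof.
move=> sz sS; have [S_fit _] := HS; have s_fit := S_fit s sS.
apply: (@eq_from_nth _ 0) => [|j].
  by rewrite size_map size_iota size_takel // size_drop size_map size_iota; lia.
rewrite size_takel ?size_drop ?size_map ?size_iota => [j_lt|]; last by lia.
have map_lt : pos_map pi tau j < size pi by apply: pos_map_lt.
rewrite nth_take // nth_drop !(nth_map 0) ?size_iota; try lia.
rewrite !nth_iota ?add0n; try lia.
rewrite (window_map_in C HS sS); last by lia.
by rewrite addKn nth_take // nth_drop.
Qed.

Lemma occurs_rearrange sg s : size sg = n -> s \in S ->
  occurs pi sg s -> occurs tau (rearrange pi tau S n sg) s.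
Proof.
move=> sz sS /andP[_ /eqP st_w]; have [_ pi_tau _ _] := C.
rewrite /occurs -(perm_size pi_tau) size_map size_iota (window_rearrange sz sS).
by rewrite (st_pos_map C st_w) eqxx andbT; case: HS => S_fit _; apply: S_fit.
Qed.

End Rearrangement.

Lemma admissible_occurs pi n S sg :
  size sg = n -> all (occurs pi sg) S -> admissible pi n S.
Proof.
move=> sz /allP occ_S; split=> [s /occ_S /andP[fit _] | s s' sS s'S]; first by rewrite -sz.
exact: occurs_overlap (occ_S s sS) (occ_S s' s'S).
Qed.

Lemma size_permutations_iota n sg : sg \in permutations (iota 1 n) -> size sg = n.
Proof. by rewrite mem_permutations => /perm_size ->; rewrite size_iota. Qed.

Lemma count_occurs_leq pi tau n S : compatible pi tau ->
  count (fun sg => all (occurs pi sg) S) (permutations (iota 1 n)) <=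
  count (fun sg => all (occurs tau sg) S) (permutations (iota 1 n)).
Proof.
move=> C; set P := permutations (iota 1 n).
have [/hasP[sg0 sg0P occ0] | no_sg] := boolP (has (fun sg => all (occurs pi sg) S) P);
  last by rewrite has_count -leqNgt leqn0 in no_sg; rewrite (eqP no_sg).
have HS := admissible_occurs (size_permutations_iota sg0P) occ0.
apply: (count_leq_inj (f := rearrange pi tau S n)); first exact: permutations_uniq.
- by move=> sg; rewrite !mem_permutations; apply: perm_rearrange.
- move=> sg sg' /size_permutations_iota sz /size_permutations_iota sz'.
  exact: rearrange_inj.
move=> sg /size_permutations_iota sz /allP occ_sg; apply/allP => s sS.
exact: occurs_rearrange (occ_sg s sS).
Qed.

(* 0-based starting positions; the bound n.+1 also accommodates the empty pattern. *)
Definition occurrence_set (n : nat) (p sg : seq nat) : {set 'I_n.+1} :=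
  [set i : 'I_n.+1 | occurs p sg i].

Lemma subset_occurrence_set n p sg (A : {set 'I_n.+1}) :
  (A \subset occurrence_set n p sg) = all (occurs p sg) [seq val i | i <- enum A].
Proof.
apply/subsetP/allP => [A_occ _ /mapP[i iA ->] | occ_A i iA].
  by rewrite mem_enum in iA; have := A_occ i iA; rewrite inE.
by rewrite inE occ_A // map_f ?mem_enum.
Qed.

Lemma seteqP (s t : seq nat) : reflect (s =i t) (seteq s t).
Proof.
apply: (iffP andP) => [[/allP st /allP ts] x | eq_st].
  by apply/idP/idP => [/st | /ts].
by split; apply/allP => x; rewrite inE eq_st.
Qed.

Lemma seteq_Em p n sg S : size sg = n -> all (fun i => 0 < i) S ->
  seteq (Em p sg) S =
  (occurrence_set n p sg == [set i : 'I_n.+1 | i.+1 \in S]) && all (fun i => i <= n.+1) S.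
Proof.
move=> sz /allP S_pos.
have Em_le x : x \in Em p sg -> 0 < x <= n.+1 by rewrite -sz; apply: mem_Em.
apply/seteqP/andP => [eq_Em_S | [/eqP/setP eq_sets /allP S_le] x].
  split; first by apply/eqP/setP => i; rewrite !inE -Em_occurs eq_Em_S.
  by apply/allP => x; rewrite -eq_Em_S => /Em_le /andP[].
have x_bounds : (x \in Em p sg) || (x \in S) -> 0 < x <= n.+1.
  by case/orP => [/Em_le // | x_S]; rewrite S_pos ?S_le.
have [x_le | x_out] := boolP (0 < x <= n.+1).
  case: x x_le {x_bounds} => // x x_le.
  by have := eq_sets (Ordinal x_le); rewrite !inE -Em_occurs.
by apply/idP/idP => x_in; case/negP: x_out; apply: x_bounds; rewrite x_in ?orbT.
Qed.

Definition occurrence_count (n : nat) (p : seq nat) (B : {set 'I_n.+1}) : nat :=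
  count (fun sg => occurrence_set n p sg == B) (permutations (iota 1 n)).

Lemma count_subset_occurrence_set n pi tau (A : {set 'I_n.+1}) : compatible pi tau ->
  count (fun sg => A \subset occurrence_set n pi sg) (permutations (iota 1 n)) =
  count (fun sg => A \subset occurrence_set n tau sg) (permutations (iota 1 n)).
Proof.
move=> C; rewrite (eq_count (subset_occurrence_set pi ^~ A)).
rewrite (eq_count (subset_occurrence_set tau ^~ A)).
by apply/eqP; rewrite eqn_leq !count_occurs_leq //; apply: compatible_sym.
Qed.

Lemma a_count_occurrence_count p n S : all (fun i => 0 < i) S ->
  a_count p n S =
  if all (fun i => i <= n.+1) S then occurrence_count p [set i : 'I_n.+1 | i.+1 \in S]
  else 0.
Proof.
move=> S_pos; rewrite /a_count (eq_in_count (a2 := fun sg =>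
  (occurrence_set n p sg == [set i : 'I_n.+1 | i.+1 \in S]) && all (fun i => i <= n.+1) S));
  last by move=> sg /size_permutations_iota /seteq_Em ->.
case: ifP => S_le; first by apply: eq_count => sg; rewrite andbT.
by rewrite (eq_count (a2 := pred0)) ?count_pred0 // => sg; rewrite andbF.
Qed.

Theorem theorem1p11 (m : nat) (pi tau : seq nat) :
  is_perm m pi -> is_perm m tau ->
  overlaps pi = overlaps tau ->
  (forall i, i \in overlaps pi ->
     take (m - i) pi =i take (m - i) tau /\ drop i pi =i drop i tau) ->
  super_strongly_cwilf_equiv pi tau.
Proof.
move=> pi_perm tau_perm eq_ov eq_sets.
have sz_pi : size pi = m by rewrite (perm_size pi_perm) size_iota.
have C : compatible pi tau.
  split; rewrite ?sz_pi //; first by rewrite (perm_uniq pi_perm) iota_uniq.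
  by rewrite (perm_trans pi_perm) // perm_sym.
move=> n S S_pos; rewrite !a_count_occurrence_count //; case: ifP => // _.
apply: eq_from_superset_sums => A; rewrite -!count_superset.
exact: count_subset_occurrence_set.
Qed.
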